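(* Let $\mathcal Z_\nu$ be the Zorich map described in the context and assume $\nu\lambda>1/e$. For $\delta>0$ let $C_\delta=\{x\in\mathbb R^3:x_1^2+x_2^2<\delta^2\}$. Then there exist $\delta\in(0,\lambda)$ and $c>0$ such that: (a) for every $x\in C_\delta$, $p_3(\mathcal Z_\nu(x))>p_3(x)+c$, where $p_3(x_1,x_2,x_3)=x_3$; (b) for every $x\in C_\delta$ with $(x_1,x_2)\neq(0,0)$ there is $n\in\mathbb N$ with $\mathcal Z_\nu^n(x)\notin C_\delta$.
   Context: Zorich maps. Let $Q=\{(x_1,x_2)\in\mathbb R^2:|x_1|\le1,|x_2|\le1\}$. Let $L\ge1$ and let $\mathfrak h=(\mathfrak h_1,\mathfrak h_2,\mathfrak h_3)$ be a sense-preserving $L$-bi-Lipschitz map (i.e. $|a-b|/L\le|\mathfrak h(a)-\mathfrak h(b)|\le L|a-b|$) of $Q$ onto the closed upper unit hemisphere $\{x\in\mathbb R^3:|x|=1,x_3\ge0\}$, with $\partial Q$ mapped onto the equator. Assume $\mathfrak h_1(t,t)=\mathfrak h_2(t,t)$ and $\mathfrak h_1(t,-t)=-\mathfrak h_2(t,-t)$ for $t\in[-1,1]$ (so $\mathfrak h(0,0)=(0,0,1)$). Let $\lambda\ge1$ and $h(x_1,x_2)=\lambda\mathfrak h(x_1/\lambda,x_2/\lambda)$ on $\lambda Q=[-\lambda,\lambda]^2$. For $\nu>0$ set $\mathcal Z_\nu(x_1,x_2,x_3)=\nu e^{x_3}h(x_1,x_2)$ on $\lambda Q\times\mathbb R$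 (which is mapped onto $\{x_3\ge0\}$), and extend $\mathcal Z_\nu$ to $\mathbb R^3$ by repeated reflection: in the domain across the faces $x_1=(2k+1)\lambda$, $x_2=(2k+1)\lambda$ ($k\in\mathbb Z$) of the beams, and in the range across the plane $x_3=0$. *)

From Stdlib Require Import Reals ZArith.
Open Scope R_scope.

Definition pt2 := (R * R)%type.
Definition pt3 := (R * R * R)%type.
Definition p1 (x : pt3) : R := fst (fst x).
Definition p2 (x : pt3) : R := snd (fst x).
Definition p3 (x : pt3) : R := snd x.

Definition dist2 (a b : pt2) : R :=
  sqrt ((fst a - fst b) ^ 2 + (snd a - snd b) ^ 2).
Definition dist3 (a b : pt3) : R :=
  sqrt ((p1 a - p1 b) ^ 2 + (p2 a - p2 b) ^ 2 + (p3 a - p3 b) ^ 2).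

Definition inQ (a : pt2) : Prop :=
  Rabs (fst a) <= 1 /\ Rabs (snd a) <= 1.
Definition onbdQ (a : pt2) : Prop :=
  inQ a /\ (Rabs (fst a) = 1 \/ Rabs (snd a) = 1).

Definition upper_hemisphere (y : pt3) : Prop :=
  p1 y ^ 2 + p2 y ^ 2 + p3 y ^ 2 = 1 /\ 0 <= p3 y.
Definition equator (y : pt3) : Prop :=
  p1 y ^ 2 + p2 y ^ 2 + p3 y ^ 2 = 1 /\ p3 y = 0.

Definition orient2 (a b c : pt2) : R :=
  (fst b - fst a) * (snd c - snd a) - (snd b - snd a) * (fst c - fst a).
Definition proj12 (y : pt3) : pt2 := (p1 y, p2 y).

(* Sense-preserving: the boundary of Q, traversed counterclockwise, is mapped
   onto the equator traversed counterclockwise (seen from (0,0,1)); i.e. every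
   positively oriented triple on the boundary square is sent to a positively
   oriented triple on the equator. *)
Definition sense_preserving (hh : pt2 -> pt3) : Prop :=
  forall a b c : pt2, onbdQ a -> onbdQ b -> onbdQ c ->
    orient2 a b c > 0 -> orient2 (proj12 (hh a)) (proj12 (hh b)) (proj12 (hh c)) > 0.

Definition zorich_base (L : R) (hh : pt2 -> pt3) : Prop :=
  1 <= L /\
  (forall a b : pt2, inQ a -> inQ b ->
      dist2 a b / L <= dist3 (hh a) (hh b) /\ dist3 (hh a) (hh b) <= L * dist2 a b) /\
  sense_preserving hh /\
  (forall a : pt2, inQ a -> upper_hemisphere (hh a)) /\
  (forall y : pt3, upper_hemisphere y -> exists a : pt2, inQ a /\ hh a = y) /\
  (forall a : pt2, onbdQ a -> equator (hh a)) /\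
  (forall y : pt3, equator y -> exists a : pt2, onbdQ a /\ hh a = y) /\
  (forall t : R, -1 <= t <= 1 -> p1 (hh (t, t)) = p2 (hh (t, t))) /\
  (forall t : R, -1 <= t <= 1 -> p1 (hh (t, -t)) = - p2 (hh (t, -t))).

(* Folding of the real line by reflections across the lines (2k+1)lam:
   beam index k = floor((t + lam)/(2 lam)), so that t in [(2k-1)lam,(2k+1)lam],
   and the folded coordinate (-1)^k (t - 2 k lam) in [-lam, lam]. *)
Definition beam_index (lam t : R) : Z := (up ((t + lam) / (2 * lam)) - 1)%Z.
Definition sgnZ (k : Z) : R := if Z.even k then 1 else -1.
Definition fold (lam t : R) : R :=
  let k := beam_index lam t in sgnZ k * (t - 2 * IZR k * lam).

(* The Zorich map on R^3:  on lam Q x R it is nu e^{x3} h(x1,x2) with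
   h(x1,x2) = lam * hh(x1/lam, x2/lam); extended by reflection in the
   faces of the beams (domain) and in the plane x3 = 0 (range). *)
Definition zorich (hh : pt2 -> pt3) (lam nu : R) (x : pt3) : pt3 :=
  let k := beam_index lam (p1 x) in
  let m := beam_index lam (p2 x) in
  let y := hh (fold lam (p1 x) / lam, fold lam (p2 x) / lam) in
  let r := nu * exp (p3 x) * lam in
  ((r * p1 y, r * p2 y), sgnZ (k + m) * (r * p3 y)).

Definition cyl (delta : R) (x : pt3) : Prop := p1 x ^ 2 + p2 x ^ 2 < delta ^ 2.

From Stdlib Require Import Reals ZArith Lra Psatz Classical.
Open Scope R_scope.

(* Inside the central beam (-lam,lam)^2 x R no reflection is involved and
   Z x = nu e^{x3} lam hh(x1/lam, x2/lam).  Since hh(0,0) is the north pole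
   and hh is L-bi-Lipschitz, a point a of Q at distance |a| from the origin is
   sent to a point of height >= 1 - L|a| whose horizontal radius is at least
   |a| / (sqrt 2 L).  On the cylinder C_delta this gives two one-step
   estimates: the height grows, p3 (Z x) > nu lam e^{x3} (1 - L delta/lam),
   and the squared radius rad2 multiplies by at least K e^{2 x3}.
   For a suitable small delta, A := nu lam e (1 - L delta/lam) > 1, and then
   the gain A e^{t-1} >= t + ln A gives (a).  For (b) a purely real-variable argument suffices:
   if the heights grow by c at each step, the radius factors K e^{2 h_n}
   eventually exceed 2, so the squared radii of an orbit that stays in the
   cylinder would be unbounded, which is absurd. *)

Definition rad2 (x : pt3) : R := p1 x ^ 2 + p2 x ^ 2.

(* The central beam, where the Zorich map involves no reflection. *)
Definition central (lam : R) (x : pt3) : Prop :=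
  -lam < p1 x < lam /\ -lam < p2 x < lam.

Lemma rad2_pos (x : pt3) : (p1 x, p2 x) <> (0, 0) -> 0 < rad2 x.
Proof.
  intros Hne. unfold rad2.
  destruct (Req_dec (p1 x) 0) as [E1 | E1].
  - destruct (Req_dec (p2 x) 0) as [E2 | E2].
    + exfalso. apply Hne. rewrite E1, E2. reflexivity.
    + pose proof (Rsqr_pos_lt _ E2). unfold Rsqr in *. nra.
  - pose proof (Rsqr_pos_lt _ E1). unfold Rsqr in *. nra.
Qed.

Lemma cyl_central (lam delta : R) (x : pt3) :
  0 <= delta <= lam -> cyl delta x -> central lam x.
Proof. unfold cyl, central. intros Hd Hx. split; split; nra. Qed.

Lemma beam_index_central (lam t : R) :
  0 < lam -> -lam < t < lam -> beam_index lam t = 0%Z.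
Proof.
  intros Hl Ht. unfold beam_index.
  assert (Hup : (1 = up ((t + lam) / (2 * lam)))%Z).
  { apply tech_up; simpl.
    - apply Rmult_lt_reg_r with (2 * lam); [lra |].
      unfold Rdiv. rewrite Rmult_assoc, Rinv_l; lra.
    - assert (0 <= (t + lam) / (2 * lam)).
      { unfold Rdiv. apply Rmult_le_pos; [lra | left; apply Rinv_0_lt_compat; lra]. }
      lra. }
  rewrite <- Hup. reflexivity.
Qed.

Lemma zorich_central (hh : pt2 -> pt3) (lam nu : R) (x : pt3) :
  0 < lam -> central lam x ->
  zorich hh lam nu x =
  let y := hh (p1 x / lam, p2 x / lam) in
  let r := nu * exp (p3 x) * lam in ((r * p1 y, r * p2 y), r * p3 y).
Proof.
  intros Hl [H1 H2]. unfold zorich, fold.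
  rewrite (beam_index_central lam (p1 x)), (beam_index_central lam (p2 x)) by assumption.
  unfold sgnZ; simpl.
  replace (p1 x - 2 * 0 * lam) with (p1 x) by ring.
  replace (p2 x - 2 * 0 * lam) with (p2 x) by ring.
  rewrite !Rmult_1_l. reflexivity.
Qed.

(* The symmetry conditions on the diagonals force hh(0,0) to be the north pole. *)
Lemma base_pole (L : R) (hh : pt2 -> pt3) : zorich_base L hh -> hh (0, 0) = ((0, 0), 1).
Proof.
  intros (_ & _ & _ & Hup & _ & _ & _ & Hd1 & Hd2).
  assert (A := Hd1 0 ltac:(lra)). assert (B := Hd2 0 ltac:(lra)).
  rewrite Ropp_0 in B. rewrite A in B.
  assert (Hq : inQ (0, 0)) by (unfold inQ; simpl; rewrite Rabs_R0; lra).
  destruct (Hup _ Hq) as [S P].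
  destruct (hh (0, 0)) as [[a b] d]. unfold p1, p2, p3 in *; simpl in *.
  assert (b = 0) by lra. subst. assert (d = 1) by nra. subst. reflexivity.
Qed.

Lemma bilipschitz_at_pole (L : R) (hh : pt2 -> pt3) (a : pt2) :
  zorich_base L hh -> inQ a ->
  let u := fst a ^ 2 + snd a ^ 2 in
  let v := p1 (hh a) ^ 2 + p2 (hh a) ^ 2 + (p3 (hh a) - 1) ^ 2 in
  u <= L ^ 2 * v /\ v <= L ^ 2 * u.
Proof.
  intros Hb Ha u v. pose proof (base_pole L hh Hb) as Hpole.
  destruct Hb as (HL & Hlip & _).
  assert (Hq : inQ (0, 0)) by (unfold inQ; simpl; rewrite Rabs_R0; lra).
  destruct (Hlip a (0, 0) Ha Hq) as [Lo Hi].
  unfold dist2, dist3 in Lo, Hi. rewrite Hpole in Lo, Hi.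
  change (p1 ((0, 0), 1)) with 0 in Lo, Hi. change (p2 ((0, 0), 1)) with 0 in Lo, Hi.
  change (p3 ((0, 0), 1)) with 1 in Lo, Hi. cbn [fst snd] in Lo, Hi.
  replace ((fst a - 0) ^ 2 + (snd a - 0) ^ 2) with u in Lo, Hi by (unfold u; ring).
  replace ((p1 (hh a) - 0) ^ 2 + (p2 (hh a) - 0) ^ 2 + (p3 (hh a) - 1) ^ 2) with v in Lo, Hi
    by (unfold v; ring).
  assert (Hu : 0 <= u)
    by (unfold u; pose proof (pow2_ge_0 (fst a)); pose proof (pow2_ge_0 (snd a)); lra).
  assert (Hv : 0 <= v)
    by (unfold v; pose proof (pow2_ge_0 (p1 (hh a))); pose proof (pow2_ge_0 (p2 (hh a)));
        pose proof (pow2_ge_0 (p3 (hh a) - 1)); lra).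
  pose proof (pow2_sqrt u Hu). pose proof (pow2_sqrt v Hv).
  pose proof (sqrt_pos u). pose proof (sqrt_pos v).
  assert (Lo' : sqrt u <= L * sqrt v).
  { apply Rmult_le_reg_r with (/ L); [apply Rinv_0_lt_compat; lra |].
    replace (L * sqrt v * / L) with (sqrt v) by (field; lra). exact Lo. }
  split.
  - assert (sqrt u ^ 2 <= (L * sqrt v) ^ 2) by (apply pow_incr; lra). nra.
  - assert (sqrt v ^ 2 <= (L * sqrt u) ^ 2) by (apply pow_incr; lra). nra.
Qed.

(* Near the pole: a point a of Q is sent to height >= 1 - L|a| and horizontal
   radius >= |a| / (sqrt 2 L); the second uses |hh a - N|^2 = 2 - 2 p3 (hh a). *)
Lemma base_near_pole (L : R) (hh : pt2 -> pt3) (a : pt2) :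
  zorich_base L hh -> inQ a ->
  (p3 (hh a) - 1) ^ 2 <= L ^ 2 * (fst a ^ 2 + snd a ^ 2) /\
  (fst a ^ 2 + snd a ^ 2) / (2 * L ^ 2) <= p1 (hh a) ^ 2 + p2 (hh a) ^ 2.
Proof.
  intros Hb Ha.
  destruct (bilipschitz_at_pole L hh a Hb Ha) as [Lo Hi]. cbv zeta in Lo, Hi.
  assert (HL : 1 <= L) by (destruct Hb; assumption).
  destruct Hb as (_ & _ & _ & Hup & _). destruct (Hup a Ha) as [Hsph Hnn].
  split; [nra |].
  apply Rmult_le_reg_r with (2 * L ^ 2); [nra |].
  replace ((fst a ^ 2 + snd a ^ 2) / (2 * L ^ 2) * (2 * L ^ 2))
    with (fst a ^ 2 + snd a ^ 2) by (field; lra).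
  nra.
Qed.

Lemma central_base_point (lam : R) (x : pt3) :
  0 < lam -> central lam x ->
  inQ (p1 x / lam, p2 x / lam) /\
  (p1 x / lam) ^ 2 + (p2 x / lam) ^ 2 = rad2 x / lam ^ 2.
Proof.
  intros Hl [H1 H2]. unfold rad2. split; [| field; lra].
  assert (E1 : p1 x / lam * lam = p1 x) by (field; lra).
  assert (E2 : p2 x / lam * lam = p2 x) by (field; lra).
  unfold inQ; cbn [fst snd]; split; apply Rabs_le; split; nra.
Qed.

Lemma zorich_height (L : R) (hh : pt2 -> pt3) (lam nu delta : R) (x : pt3) :
  zorich_base L hh -> 0 < lam -> 0 < nu -> 0 <= delta <= lam -> cyl delta x ->
  p3 (zorich hh lam nu x) > nu * lam * exp (p3 x) * (1 - L * delta / lam).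
Proof.
  intros Hb Hl Hnu Hd Hx.
  assert (HL : 1 <= L) by (destruct Hb; assumption).
  assert (Hc := cyl_central lam delta x Hd Hx).
  destruct (central_base_point lam x Hl Hc) as [Ha Er].
  destruct (base_near_pole L hh _ Hb Ha) as [Hheight _]. cbn [fst snd] in Hheight.
  rewrite Er in Hheight.
  rewrite zorich_central by assumption. cbv zeta. unfold p3 at 1; cbn [snd].
  set (y := hh (p1 x / lam, p2 x / lam)) in *.
  set (k := L * delta / lam).
  assert (Hk : 0 <= k).
  { unfold k, Rdiv. apply Rmult_le_pos; [nra | left; apply Rinv_0_lt_compat; lra]. }
  assert (Hsmall : L ^ 2 * (rad2 x / lam ^ 2) < k ^ 2).
  { unfold k, cyl, rad2 in *.
    replace ((L * delta / lam) ^ 2) with (L ^ 2 * (delta ^ 2 / lam ^ 2)) by (field; lra).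
    apply Rmult_lt_compat_l; [nra |].
    unfold Rdiv. apply Rmult_lt_compat_r; [apply Rinv_0_lt_compat; nra | exact Hx]. }
  assert (Hy : p3 y > 1 - k) by nra.
  pose proof (exp_pos (p3 x)).
  assert (Hr : 0 < nu * exp (p3 x) * lam) by (apply Rmult_lt_0_compat; [apply Rmult_lt_0_compat |]; lra).
  replace (nu * lam * exp (p3 x) * (1 - k)) with (nu * exp (p3 x) * lam * (1 - k)) by ring.
  apply Rmult_lt_compat_l; assumption.
Qed.

Lemma zorich_radial (L : R) (hh : pt2 -> pt3) (lam nu : R) (x : pt3) :
  zorich_base L hh -> 0 < lam -> central lam x ->
  rad2 (zorich hh lam nu x) >= nu ^ 2 / (2 * L ^ 2) * exp (p3 x) ^ 2 * rad2 x.
Proof.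
  intros Hb Hl Hc.
  assert (HL : 1 <= L) by (destruct Hb; assumption).
  destruct (central_base_point lam x Hl Hc) as [Ha Er].
  destruct (base_near_pole L hh _ Hb Ha) as [_ Hradius]. cbn [fst snd] in Hradius.
  rewrite Er in Hradius.
  rewrite zorich_central by assumption. cbv zeta.
  set (y := hh (p1 x / lam, p2 x / lam)) in *.
  set (r := nu * exp (p3 x) * lam).
  change (rad2 ((r * p1 y, r * p2 y), r * p3 y)) with ((r * p1 y) ^ 2 + (r * p2 y) ^ 2).
  replace ((r * p1 y) ^ 2 + (r * p2 y) ^ 2) with (r ^ 2 * (p1 y ^ 2 + p2 y ^ 2)) by ring.
  replace (nu ^ 2 / (2 * L ^ 2) * exp (p3 x) ^ 2 * rad2 x)
    with (r ^ 2 * (rad2 x / lam ^ 2 / (2 * L ^ 2))) by (unfold r; field; lra).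
  apply Rle_ge, Rmult_le_compat_l; [nra | exact Hradius].
Qed.

(* Convexity of exp: for A > 1, A e^{t-1} = e^{ln A + t - 1} >= t + ln A > t + ln A / 2. *)
Lemma height_gain (A t : R) : 1 < A -> A * exp (t - 1) > t + ln A / 2.
Proof.
  intros HA.
  assert (Hln : 0 < ln A) by (rewrite <- ln_1; apply ln_increasing; lra).
  replace (A * exp (t - 1)) with (exp (ln A + (t - 1))) by (rewrite exp_plus, exp_ln; lra).
  pose proof (exp_ineq1_le (ln A + (t - 1))). lra.
Qed.

Lemma eventually_doubling (h : nat -> R) (c K : R) :
  0 < c -> 0 < K -> (forall n, h (S n) > h n + c) ->
  exists N, forall m, 2 <= K * exp (h (N + m)%nat) ^ 2.
Proof.
  intros Hc HK Hh.
  assert (Hlin : forall n, h n >= h 0%nat + INR n * c).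
  { induction n as [| n IH]; [simpl; lra |]. rewrite S_INR. pose proof (Hh n). lra. }
  set (T := ln (2 / K) / 2).
  assert (ET : exp T ^ 2 = 2 / K).
  { replace (exp T ^ 2) with (exp (T + T)) by (rewrite exp_plus; ring).
    replace (T + T) with (ln (2 / K)) by (unfold T; field).
    apply exp_ln. unfold Rdiv. apply Rmult_lt_0_compat; [lra | apply Rinv_0_lt_compat; lra]. }
  destruct (INR_archimed c (T - h 0%nat) ltac:(lra)) as [N HN].
  exists N. intro m.
  pose proof (Hlin (N + m)%nat) as Hm. rewrite plus_INR in Hm. pose proof (pos_INR m).
  assert (exp T < exp (h (N + m)%nat)) by (apply exp_increasing; nra).
  pose proof (exp_pos T).
  assert (exp T ^ 2 <= exp (h (N + m)%nat) ^ 2) by (apply pow_incr; lra).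
  assert (K * (2 / K) = 2) by (field; lra).
  nra.
Qed.

Lemma radius_unbounded (h rho : nat -> R) (c K B : R) :
  0 < c -> 0 < K -> 0 < rho 0%nat ->
  (forall n, h (S n) > h n + c) ->
  (forall n, rho (S n) >= K * exp (h n) ^ 2 * rho n) ->
  exists n, B <= rho n.
Proof.
  intros Hc HK H0 Hh Hrho.
  assert (Hpos : forall n, 0 < rho n).
  { induction n as [| n IH]; [exact H0 |].
    pose proof (Hrho n). pose proof (exp_pos (h n)).
    assert (0 < K * exp (h n) ^ 2 * rho n)
      by (apply Rmult_lt_0_compat; [apply Rmult_lt_0_compat; [lra | nra] | lra]).
    lra. }
  destruct (eventually_doubling h c K Hc HK Hh) as [N HN].
  assert (Hlin : forall m, rho (N + m)%nat >= (1 + INR m) * rho N).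
  { induction m as [| m IH]; [rewrite Nat.add_0_r; simpl; lra |].
    rewrite Nat.add_succ_r, S_INR.
    pose proof (Hrho (N + m)%nat). pose proof (HN m). pose proof (Hpos (N + m)%nat).
    pose proof (Hpos N). pose proof (pos_INR m). nra. }
  destruct (INR_archimed (rho N) B (Hpos N)) as [m Hm].
  exists (N + m)%nat. pose proof (Hlin m). pose proof (Hpos N). nra.
Qed.

(* Any map with the two one-step estimates on C_delta pushes every off-axis
   point of C_delta out of it: otherwise its orbit would contradict
   [radius_unbounded] with B = delta^2. *)
Lemma orbit_leaves_cylinder (f : pt3 -> pt3) (delta c K : R) :
  0 < c -> 0 < K ->
  (forall x, cyl delta x -> p3 (f x) > p3 x + c) ->
  (forall x, cyl delta x -> rad2 (f x) >= K * exp (p3 x) ^ 2 * rad2 x) ->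
  forall x, cyl delta x -> 0 < rad2 x -> exists n, ~ cyl delta (Nat.iter n f x).
Proof.
  intros Hc HK Hheight Hradius x Hx Hpos.
  apply NNPP. intro Hstay.
  assert (Hall : forall n, cyl delta (Nat.iter n f x)).
  { intro n. apply NNPP. intro Hn. apply Hstay. exists n. exact Hn. }
  destruct (radius_unbounded (fun n => p3 (Nat.iter n f x)) (fun n => rad2 (Nat.iter n f x))
              c K (delta ^ 2) Hc HK Hpos (fun n => Hheight _ (Hall n))
              (fun n => Hradius _ (Hall n))) as [n Hn].
  specialize (Hall n). unfold cyl, rad2 in *. lra.
Qed.

(* Choice of the radius: for s > 1 the cylinder radius
   delta = lam (s-1) / (2 s L) gives s (1 - L delta / lam) = (s+1)/2 > 1. *)
Lemma thin_cylinder_radius (L lam s : R) :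
  1 <= L -> 1 <= lam -> 1 < s ->
  exists delta, 0 < delta < lam /\ 1 < s * (1 - L * delta / lam).
Proof.
  intros HL Hlam Hs.
  set (delta := lam * (s - 1) / (2 * s * L)).
  assert (HsL : 0 < 2 * s * L) by nra.
  assert (Hdelta : delta * (2 * s * L) = lam * (s - 1)) by (unfold delta; field; lra).
  exists delta. split; [split |].
  - unfold delta. apply Rdiv_lt_0_compat; nra.
  - apply Rmult_lt_reg_r with (2 * s * L); [exact HsL |].
    rewrite Hdelta. apply Rmult_lt_compat_l; nra.
  - replace (s * (1 - L * delta / lam)) with ((s + 1) / 2) by (unfold delta; field; lra). lra.
Qed.

Theorem lemma4p2 (L lam nu : R) (hh : pt2 -> pt3) :
  zorich_base L hh -> 1 <= lam -> 0 < nu -> nu * lam > / exp 1 ->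
  exists delta c : R, 0 < delta /\ delta < lam /\ 0 < c /\
    (forall x : pt3, cyl delta x -> p3 (zorich hh lam nu x) > p3 x + c) /\
    (forall x : pt3, cyl delta x -> (p1 x, p2 x) <> (0, 0) ->
       exists n : nat, ~ cyl delta (Nat.iter n (zorich hh lam nu) x)).
Proof.
  intros Hb Hlam Hnu Hnl.
  assert (HL : 1 <= L) by (destruct Hb; assumption).
  assert (Hs : 1 < nu * lam * exp 1).
  { pose proof (exp_pos 1). apply Rmult_gt_compat_r with (r := exp 1) in Hnl; [| lra].
    rewrite Rinv_l in Hnl; lra. }
  destruct (thin_cylinder_radius L lam _ HL Hlam Hs) as [delta [Hdelta HA]].
  set (A := nu * lam * exp 1 * (1 - L * delta / lam)) in HA.
  assert (Hheight : forall x, cyl delta x -> p3 (zorich hh lam nu x) > p3 x + ln A / 2).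
  { intros x Hx.
    pose proof (zorich_height L hh lam nu delta x Hb ltac:(lra) Hnu ltac:(lra) Hx) as Hstep.
    replace (exp (p3 x)) with (exp (p3 x - 1) * exp 1) in Hstep
      by (rewrite <- exp_plus; f_equal; ring).
    pose proof (height_gain A (p3 x) HA). unfold A in *. nra. }
  assert (Hc : 0 < ln A / 2).
  { pose proof (ln_increasing 1 A ltac:(lra) HA) as Hln. rewrite ln_1 in Hln. lra. }
  exists delta, (ln A / 2). do 4 (split; [lra || exact Hheight |]).
  intros x Hx Hne.
  apply (orbit_leaves_cylinder _ delta (ln A / 2) (nu ^ 2 / (2 * L ^ 2)) Hc); auto.
  - unfold Rdiv. apply Rmult_lt_0_compat; [nra | apply Rinv_0_lt_compat; nra].
  - intros y Hy. apply zorich_radial; [exact Hb | lra |].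
    apply (cyl_central lam delta); [lra | exact Hy].
  - apply rad2_pos, Hne.
Qed.
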